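(* Consider the atomic model under the Shapley scheme with one large player of stake $a$ and all other players of stake $1$. If a Nash equilibrium partition contains two pools $S_1,S_2$ each consisting only of players of stake $1$, then $\big||S_1|-|S_2|\big|\le 1$.
   Context: Atomic model with threshold $h$: one player has stake $a$ and all others stake $1$, where $h,a$ are integers with $2\le a\le h-1$. Pools partition the players; a pool $S$ has reward $\rho(S)=1$ if its total stake is at least $h$ (winning) and $0$ otherwise. Shapley scheme: player $i$ in pool $S$ receives $\phi_i(S)=\sum_{T\subseteq S\setminus\{i\}}\frac{|T|!(|S|-|T|-1)!}{|S|!}(\rho(T\cup\{i\})-\rho(T))$. A partition into winning pools is a Nash equilibrium if no player can strictly increase her payment by moving to another pool of the partition or opening a new pool alone. *)

From mathcomp Require Import all_boot all_order all_algebra.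
Set Implicit Arguments. Unset Strict Implicit. Unset Printing Implicit Defensive.
Import Order.TTheory GRing.Theory Num.Theory.

Section Model.
Variables (T : finType) (p0 : T) (a h : nat).

Definition stake (i : T) : nat := if i == p0 then a else 1.

Definition total_stake (S : {set T}) : nat := \sum_(i in S) stake i.

Definition rho (S : {set T}) : rat := if h <= total_stake S then 1%R else 0%R.

Definition shapley (i : T) (S : {set T}) : rat :=
  (\sum_(U : {set T} | U \subset S :\ i)
     ((#|U|`! * (#|S| - #|U| - 1)`!)%:R / (#|S|`!)%:R) * (rho (i |: U) - rho U))%R.

Definition winning (S : {set T}) : Prop := h <= total_stake S.

Definition nash_equilibrium (P : {set {set T}}) : Prop :=
  partition P [set: T] /\
  (forall S, S \in P -> winning S) /\
  (forall S i, S \in P -> i \in S ->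
     (forall S', S' \in P -> S' != S -> (shapley i (i |: S') <= shapley i S)%R) /\
     (shapley i [set i] <= shapley i S)%R).
End Model.

From mathcomp Require Import all_boot all_order all_algebra.
From mathcomp Require Import zify.
Import GRing.Theory Num.Theory.

Set Implicit Arguments.
Unset Strict Implicit.
Unset Printing Implicit Defensive.

(* In a winning pool of unit-stake players, a player is pivotal exactly for
   the coalitions of size h - 1 of the others, and the Shapley weights of
   these coalitions add up to 1/|S|: each member of such a pool is paid
   1/|S|.  A member of S1 moving to S2 would be paid 1/(|S2| + 1), so
   stability forces 1/(|S2| + 1) <= 1/|S1|, i.e. |S1| <= |S2| + 1. *)

Lemma shapley_weight_binomial (R : numFieldType) (n k : nat) : k < n ->
  ((k`! * (n - k - 1)`!)%:R / (n`!)%:R *+ 'C(n.-1, k) : R)%R = (n%:R)^-1%R.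
Proof.
case: n => // n; rewrite ltnS => le_kn.
rewrite subn1 subSKn /= -mulr_natr mulrAC -natrM mulnC bin_fact //.
by rewrite factS natrM invfM mulrCA divff ?mulr1 // pnatr_eq0 -lt0n fact_gt0.
Qed.

Section UnitPools.
Variables (T : finType) (p0 : T) (a h : nat).

Lemma total_stake_unit (U : {set T}) : p0 \notin U -> total_stake p0 a U = #|U|.
Proof.
move=> p0U; rewrite /total_stake -sum1_card; apply: eq_bigr => j jU.
by rewrite /stake; case: eqP => // j_p0; rewrite -j_p0 jU in p0U.
Qed.

Lemma rho_marginal_unit (S U : {set T}) (i : T) :
  p0 \notin S -> i \in S -> U \subset S :\ i -> 0 < h ->
  (rho p0 a h (i |: U) - rho p0 a h U = (#|U| == h.-1)%:R)%R.
Proof.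
move=> p0S iS sUS h_gt0.
have p0U : p0 \notin U.
  by apply: contra p0S => /(subsetP sUS); rewrite in_setD1 => /andP[].
have iU : i \notin U by apply/negP => /(subsetP sUS); rewrite in_setD1 eqxx.
have p0iU : p0 \notin i |: U.
  by rewrite in_setU1 negb_or p0U andbT; apply: contraNneq p0S => ->.
rewrite /rho !total_stake_unit // cardsU1 iU add1n.
have [hU | hU] := leqP h #|U|.
  by rewrite leqW // subrr (_ : _ == _ = false) //; apply/eqP; lia.
have -> : (h <= #|U|.+1) = (#|U| == h.-1) by apply/idP/eqP; lia.
by rewrite subr0; case: eqP.
Qed.

Lemma shapley_unit_pool (S : {set T}) (i : T) :
  p0 \notin S -> i \in S -> 0 < h <= #|S| ->
  shapley p0 a h i S = (#|S|%:R)^-1%R.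
Proof.
move=> p0S iS /andP[h_gt0 hS].
pose w : rat := ((h.-1`! * (#|S| - h.-1 - 1)`!)%:R / (#|S|`!)%:R)%R.
have pivotal (U : {set T}) : U \subset S :\ i ->
    ((#|U|`! * (#|S| - #|U| - 1)`!)%:R / (#|S|`!)%:R
       * (rho p0 a h (i |: U) - rho p0 a h U) = (if #|U| == h.-1 then w else 0))%R.
  move=> sUS; rewrite (rho_marginal_unit p0S iS sUS h_gt0) mulr_natr mulrb.
  by case: eqP => // ->.
rewrite /shapley (eq_bigr _ pivotal).
have card_Si : #|S :\ i| = #|S|.-1 by rewrite (cardsD1 i S) iS.
rewrite -big_mkcondr /= sumr_const -cardsE cards_draws card_Si.
by rewrite shapley_weight_binomial //; lia.
Qed.

Lemma nash_unit_pool_card_le (P : {set {set T}}) (S1 S2 : {set T}) :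
  0 < h -> nash_equilibrium p0 a h P ->
  S1 \in P -> S2 \in P -> S1 != S2 -> p0 \notin S1 -> p0 \notin S2 ->
  #|S1| <= #|S2| + 1.
Proof.
move=> h_gt0 [/and3P[_ trivP P_0] [winP stableP]] PS1 PS2 S12 p0S1 p0S2.
have [i iS1] : exists i, i \in S1.
  by apply/set0Pn; apply: contraNneq P_0 => <-.
have iS2 : i \notin S2 by rewrite (disjointFr (trivIsetP trivP _ _ PS1 PS2 S12)).
have p0iS2 : p0 \notin i |: S2.
  by rewrite in_setU1 negb_or p0S2 andbT; apply: contraNneq p0S1 => ->.
have hS1 : h <= #|S1| by rewrite -(total_stake_unit p0S1); apply: winP.
have hS2 : h <= #|S2| by rewrite -(total_stake_unit p0S2); apply: winP.
have := (stableP _ _ PS1 iS1).1 _ PS2; rewrite eq_sym => /(_ S12).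
rewrite !shapley_unit_pool ?setU11 ?cardsU1 ?iS2 ?h_gt0 //=; last by lia.
by rewrite lef_pV2 ?posrE ?ltr0n ?ler_nat; lia.
Qed.

End UnitPools.

Theorem lemma3p8 (T : finType) (p0 : T) (a h : nat)
  (ha : 2 <= a) (hah : a <= h - 1)
  (P : {set {set T}}) (HP : nash_equilibrium p0 a h P)
  (S1 S2 : {set T}) (H1 : S1 \in P) (H2 : S2 \in P) (H12 : S1 != S2)
  (n1 : p0 \notin S1) (n2 : p0 \notin S2) :
  (#|S1| <= #|S2| + 1) /\ (#|S2| <= #|S1| + 1).
Proof.
have h_gt0 : 0 < h by lia.
split; apply: (nash_unit_pool_card_le h_gt0 HP) => //; by rewrite eq_sym.
Qed.
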